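(* For every $n\ge1$ there exists a surjective open polyhedral map $(0,1)^n\to[0,1]^n$.
   Context: A polyhedron is a finite union of convex hulls of finite subsets of some $\mathbb R^d$; an open subpolyhedron of a polyhedron $P$ is $P\setminus R$ with $R\subseteq P$ a polyhedron, and $\mathrm{Sub}_o P$ denotes the set of these. The cube $[0,1]^n$ is equipped with the basis $\mathrm{Sub}_o[0,1]^n$, and $(0,1)^n$ (an open subpolyhedron of $[0,1]^n$) is equipped with the basis $\mathrm{Sub}_o(0,1)^n:=\{O\cap(0,1)^n: O\in\mathrm{Sub}_o[0,1]^n\}$. A map $g\colon(0,1)^n\to[0,1]^n$ is polyhedral if $g^{-1}[O]\in\mathrm{Sub}_o(0,1)^n$ for every $O\in\mathrm{Sub}_o[0,1]^n$, and open if $g[U]\in\mathrm{Sub}_o[0,1]^n$ for every $U\in\mathrm{Sub}_o(0,1)^n$. *)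

From HB Require Import structures.
From mathcomp Require Import all_boot all_order all_algebra.
From mathcomp Require Import all_classical reals.
Set Implicit Arguments. Unset Strict Implicit. Unset Printing Implicit Defensive.
Import Order.TTheory GRing.Theory Num.Theory.
Local Open Scope ring_scope.
Local Open Scope classical_set_scope.

Section Polyhedra.
Variables (R : realType) (n : nat).

Definition Rpoint := 'I_n -> R.

Definition conv_hull (k : nat) (S : 'I_k -> Rpoint) : set Rpoint :=
  [set x | exists w : 'I_k -> R,
     (forall i, 0 <= w i) /\ \sum_(i < k) w i = 1 /\
     forall j, x j = \sum_(i < k) w i * S i j].

Definition polyhedron (P : set Rpoint) : Prop :=
  exists (m : nat) (sz : 'I_m -> nat) (S : forall t : 'I_m, 'I_(sz t) -> Rpoint),
    P = [set x | exists t : 'I_m, conv_hull (S t) x].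

Definition cube : set Rpoint := [set x | forall i, 0 <= x i <= 1].
Definition ocube : set Rpoint := [set x | forall i, 0 < x i < 1].

Definition SubO_cube (O : set Rpoint) : Prop :=
  exists Q : set Rpoint, polyhedron Q /\ Q `<=` cube /\ O = cube `\` Q.

Definition SubO_ocube (U : set Rpoint) : Prop :=
  exists O : set Rpoint, SubO_cube O /\ U = O `&` ocube.

(* a map g : (0,1)^n -> [0,1]^n is represented by g : Rpoint -> Rpoint
   with g @` ocube `<=` cube; values outside ocube are irrelevant *)
Definition polyhedral_map (g : Rpoint -> Rpoint) : Prop :=
  forall O, SubO_cube O -> SubO_ocube (ocube `&` g @^-1` O).

Definition open_map (g : Rpoint -> Rpoint) : Prop :=
  forall U, SubO_ocube U -> SubO_cube (g @` U).

End Polyhedra.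

From HB Require Import structures.
From mathcomp Require Import all_boot all_order all_algebra.
From mathcomp Require Import all_classical reals.
From mathcomp Require Import ring lra.
Set Implicit Arguments. Unset Strict Implicit. Unset Printing Implicit Defensive.
Import Order.TTheory GRing.Theory Num.Theory.
Local Open Scope ring_scope.
Local Open Scope classical_set_scope.

(* The map is the coordinatewise extension [zigzag] of the three-tooth sawtooth
   [zig] on [[0, 1]].  On each of the [3^n] boxes cut out by the teeth it is an
   affine bijection [lift a] onto the cube, with inverse [unlift a].  So for a
   polyhedron [Q] in the cube, the preimage of [cube \ Q] meets the open cube
   in [cube \ ⋃_a unlift a (Q)], and the image of [(0,1)^n \ Q] is
   [cube \ ⋂_a lift a (∂cube ∪ Q)]: a point is missed exactly when each of its
   [3^n] preimages lies on the boundary or in [Q].  These sets are polyhedra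
   because finite unions of convex hulls are closed under affine images, finite
   unions and finite intersections; for intersections, clipping a convex hull
   by a half-space gives the convex hull of the vertices on the good side and
   of the points where the edges cross the hyperplane. *)

Section ConvexHull.
Variables (R : realFieldType) (V : lmodType R).

Definition hull (I : finType) (S : I -> V) : set V :=
  [set x | exists w : I -> R, (forall i, 0 <= w i) /\ \sum_i w i = 1 /\
     x = \sum_i w i *: S i].

Lemma hull_void (S : void -> V) : hull S = set0.
Proof.
apply/seteqP; split => // x [w [_ [+ _]]].
by rewrite big_pred0 // => /eqP; rewrite eq_sym oner_eq0.
Qed.

Lemma hull_vertex (I : finType) (S : I -> V) i : hull S (S i).
Proof.
exists (fun k => (k == i)%:R); split; first by move=> k; rewrite ler0n.
split; first by rewrite (bigD1 i) //= eqxx big1 ?addr0 // => k /negbTE ->.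
by rewrite (bigD1 i) //= eqxx scale1r big1 ?addr0 // => k /negbTE ->; rewrite scale0r.
Qed.

Lemma hull_segment (I : finType) (S : I -> V) x y a :
  hull S x -> hull S y -> 0 <= a <= 1 -> hull S (a *: x + (1 - a) *: y).
Proof.
move=> [w [w0 [w1 ->]]] [v [v0 [v1 ->]]] /andP[a0 a1].
exists (fun i => a * w i + (1 - a) * v i); split.
  by move=> i; rewrite addr_ge0 ?mulr_ge0 ?subr_ge0.
split; first by rewrite big_split /= -!mulr_sumr w1 v1 !mulr1 addrC subrK.
rewrite !scaler_sumr -big_split /=; apply: eq_bigr => i _.
by rewrite !scalerA -scalerDl.
Qed.

Lemma hull_subset (I J : finType) (S : I -> V) (T : J -> V) :
  (forall j, hull S (T j)) -> hull T `<=` hull S.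
Proof.
move=> /choice [u hu] x [v [v0 [v1 ->]]].
exists (fun i => \sum_j v j * u j i); split.
  move=> i; apply: sumr_ge0 => j _; rewrite mulr_ge0 //.
  by case: (hu j) => + _; apply.
split.
  rewrite exchange_big /= -[RHS]v1; apply: eq_bigr => j _.
  by rewrite -mulr_sumr; case: (hu j) => _ [-> _]; rewrite mulr1.
rewrite (eq_bigr (fun j => \sum_i (v j * u j i) *: S i)).
  by rewrite exchange_big /=; apply: eq_bigr => i _; rewrite scaler_suml.
move=> j _; case: (hu j) => _ [_ ->].
by rewrite scaler_sumr; apply: eq_bigr => i _; rewrite scalerA.
Qed.

End ConvexHull.

Section AffineImage.
Variables (R : realFieldType) (V W : lmodType R).

Definition affine (f : V -> W) :=
  forall (I : finType) (w : I -> R) (S : I -> V), \sum_i w i = 1 ->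
    f (\sum_i w i *: S i) = \sum_i w i *: f (S i).

Lemma linear_affine (f : {linear V -> W}) : affine f.
Proof.
by move=> I w S _; rewrite linear_sum; apply: eq_bigr => i _; rewrite linearZ.
Qed.

Lemma hull_image (f : V -> W) (I : finType) (S : I -> V) :
  affine f -> f @` hull S = hull (f \o S).
Proof.
move=> hf; apply/seteqP; split => x.
  by move=> [y [w [w0 [w1 ->]]] <-]; exists w; do 2!split => //; exact: hf.
move=> [w [w0 [w1 ->]]]; exists (\sum_i w i *: S i); last exact: hf.
by exists w.
Qed.

End AffineImage.

Section HalfspaceSplit.
Variables (R : realFieldType) (I : finType) (l w : I -> R) (i0 : I).

(* [l] lists the values at the vertices of an affine function.  For
   [l i <= 0 < l j], [split_point Y i j] is the point of [[Y i, Y j]] where [l]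
   vanishes; otherwise it is [Y i] if [l i <= 0] and the dummy [Y i0] if not. *)
Definition split_point (U : lmodType R) (Y : I -> U) i j : U :=
  if l i <= 0 then
    if l j <= 0 then Y i
    else (l j / (l j - l i)) *: Y i + (1 - l j / (l j - l i)) *: Y j
  else Y i0.

Let A := \sum_(i | l i <= 0) w i * - l i.
Let B := \sum_(j | ~~ (l j <= 0)) w j * l j.

(* With [A] and [B] the masses of [w * l] on the two sides of the hyperplane,
   [B <= A] lets us rewrite [\sum_i w i Y i] as
   [\sum_(l i <= 0 < l j) w i w j (l j - l i) / A * split_point Y i j
    + \sum_(l i <= 0) (1 - B / A) w i Y i].
   When [A = 0], as [x / 0 = 0], these weights reduce to [w] itself. *)
Definition split_weight i j : R :=
  if l i <= 0 then
    if l j <= 0 then (if j == i then (1 - B / A) * w i else 0)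
    else w i * w j * (l j - l i) / A
  else 0.

Lemma hull_split_point (V : lmodType R) (S : I -> V) i j :
  hull S (split_point S i j).
Proof.
rewrite /split_point; case: ifP => li; last exact: hull_vertex.
case: ifP => lj; first exact: hull_vertex.
have lj_gt0 : 0 < l j by rewrite ltNge lj.
apply: hull_segment; try exact: hull_vertex.
have lji : 0 < l j - l i by rewrite subr_gt0 (le_lt_trans li).
by rewrite divr_ge0 ?(ltW lj_gt0) ?(ltW lji) //= ler_pdivrMr // mul1r lerDl oppr_ge0.
Qed.

Lemma split_point_cst (U : lmodType R) (y : U) i j : split_point (fun _ => y) i j = y.
Proof.
by rewrite /split_point; do 2?case: ifP => _; rewrite // -scalerDl addrC subrK scale1r.
Qed.

Hypothesis w_ge0 : forall i, 0 <= w i.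
Hypothesis wl_le0 : \sum_i w i * l i <= 0.

Let sum_negE : \sum_(i | l i <= 0) w i * l i = - A.
Proof. by rewrite /A -sumrN; apply: eq_bigr => i _; rewrite mulrN opprK. Qed.

Let A_ge0 : 0 <= A.
Proof. by apply: sumr_ge0 => i li; rewrite mulr_ge0 ?oppr_ge0. Qed.

Let B_ge0 : 0 <= B.
Proof. by apply: sumr_ge0 => j lj; rewrite mulr_ge0 // ltW // ltNge. Qed.

Let B_le_A : B <= A.
Proof.
by have := wl_le0; rewrite (bigID (fun i => l i <= 0)) /= sum_negE addrC subr_le0.
Qed.

Lemma split_weight_ge0 i j : 0 <= split_weight i j.
Proof.
rewrite /split_weight; case: ifP => li //; case: ifP => lj.
  case: ifP => // _; rewrite mulr_ge0 // subr_ge0.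
  have [->|A_neq0] := eqVneq A 0; first by rewrite invr0 mulr0 ler01.
  have A_gt0 : 0 < A by rewrite lt_neqAle eq_sym A_neq0 A_ge0.
  by rewrite ler_pdivrMr // mul1r.
rewrite divr_ge0 // !mulr_ge0 // subr_ge0 ltW // (le_lt_trans li) //.
by rewrite ltNge lj.
Qed.

Let split_pointE_degenerate (U : lmodType R) (Y : I -> U) : A = 0 ->
  \sum_i \sum_j split_weight i j *: split_point Y i j = \sum_i w i *: Y i.
Proof.
move=> A0.
have B0 : B = 0 by apply/eqP; rewrite eq_le B_ge0 andbT -A0 B_le_A.
have w_pos_eq0 j : ~~ (l j <= 0) -> w j = 0.
  have wl_ge0 k : ~~ (l k <= 0) -> 0 <= w k * l k.
    by move=> lk; rewrite mulr_ge0 // ltW // ltNge.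
  move=> lj; have /eqP := psumr_eq0P wl_ge0 B0 lj.
  have lj_gt0 : 0 < l j by rewrite ltNge.
  by rewrite mulf_eq0 (gt_eqF lj_gt0) orbF => /eqP.
have weightE i j : split_weight i j = if (l i <= 0) && (j == i) then w i else 0.
  rewrite /split_weight A0 B0 invr0 !mulr0 subr0 mul1r.
  case: ifP => //= li; case: eqVneq => [->|_]; first by rewrite li.
  by case: ifP.
rewrite (eq_bigr (fun i => if l i <= 0 then w i *: Y i else 0)); last first.
  move=> i _; under eq_bigr do rewrite weightE.
  case: ifP => li; last by apply: big1 => j _; rewrite scale0r.
  rewrite (bigD1 i) //= eqxx /split_point li big1 ?addr0 // => j /negbTE ->.
  by rewrite scale0r.
by apply: eq_bigr => i _; case: ifP => // /negbT /w_pos_eq0 ->; rewrite scale0r.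
Qed.

Let split_pointE_proper (U : lmodType R) (Y : I -> U) : A != 0 ->
  \sum_i \sum_j split_weight i j *: split_point Y i j = \sum_i w i *: Y i.
Proof.
move=> A_neq0.
pose YP := \sum_(j | ~~ (l j <= 0)) w j *: Y j.
have inner i : l i <= 0 ->
    \sum_j split_weight i j *: split_point Y i j = w i *: Y i - (w i * l i / A) *: YP.
  move=> li; rewrite (bigID (fun j => l j <= 0)) /= (bigD1 i) //= big1 ?addr0; last first.
    by move=> j /andP[lj /negbTE ji]; rewrite /split_weight /split_point li lj ji scale0r.
  rewrite /split_weight /split_point li eqxx.
  rewrite (eq_bigr (fun j => (w i * (w j * l j) / A) *: Y i
                             - (w i * l i / A) *: (w j *: Y j))); last first.
    move=> j /negbTE lj; rewrite lj.
    have lji : l j - l i != 0.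
      by rewrite subr_eq0 gt_eqF // (le_lt_trans li) // ltNge lj.
    rewrite scalerDr !scalerA -scaleNr.
    by congr (_ *: _ + _ *: _); field; rewrite ?A_neq0 ?lji.
  rewrite sumrB -scaler_suml -scaler_sumr -mulr_suml -mulr_sumr -/B.
  by rewrite addrA -scalerDl; congr (_ *: _ - _); field.
rewrite (bigID (fun i => l i <= 0)) /= [X in _ + X]big1 ?addr0; last first.
  by move=> i /negbTE li; apply: big1 => j _; rewrite /split_weight li scale0r.
rewrite (eq_bigr _ inner) sumrB -scaler_suml -mulr_suml sum_negE.
by rewrite mulNr divff // scaleN1r opprK [RHS](bigID (fun i => l i <= 0)).
Qed.

Lemma split_pointE (U : lmodType R) (Y : I -> U) :
  \sum_i \sum_j split_weight i j *: split_point Y i j = \sum_i w i *: Y i.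
Proof.
by have [/split_pointE_degenerate|/split_pointE_proper] := eqVneq A 0.
Qed.

Lemma split_weight_sum : \sum_p split_weight p.1 p.2 = \sum_i w i.
Proof.
have := split_pointE (fun _ => 1 : R^o).
under eq_bigr do under eq_bigr do rewrite split_point_cst.
rewrite /GRing.scale /=; under eq_bigr do under eq_bigr do rewrite mulr1.
by under [RHS]eq_bigr do rewrite mulr1; move=> <-; rewrite pair_bigA.
Qed.

End HalfspaceSplit.

Section HalfspaceClip.
Variables (R : realFieldType) (V : lmodType R) (L : {scalar V}).

Lemma scalar_comb (I : finType) (w : I -> R) (S : I -> V) :
  L (\sum_i w i *: S i) = \sum_i w i * L (S i).
Proof. by rewrite linear_sum; apply: eq_bigr => i _; rewrite linearZ. Qed.

Lemma hull_le0 (I : finType) (S : I -> V) :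
  (forall i, L (S i) <= 0) -> hull S `<=` [set x | L x <= 0].
Proof.
move=> hS x [w [w0 [_ ->]]]; rewrite /= scalar_comb sumr_le0 // => i _.
by rewrite mulr_ge0_le0.
Qed.

Lemma hull_gt0 (I : finType) (S : I -> V) :
  (forall i, 0 < L (S i)) -> hull S `<=` [set x | 0 < L x].
Proof.
move=> LS_gt0 x [w [w0 [w1 ->]]]; rewrite /= scalar_comb ltNge; apply/negP => wL_le0.
have wL_ge0 i : 0 <= w i * L (S i) by rewrite mulr_ge0 // ltW.
have wL0 : \sum_i w i * L (S i) = 0 by apply/eqP; rewrite eq_le wL_le0 sumr_ge0.
suff : \sum_i w i = 0 by rewrite w1 => /eqP; rewrite oner_eq0.
apply: big1 => i _; have /eqP := @psumr_eq0P _ _ _ _ (fun i _ => wL_ge0 i) wL0 i isT.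
by rewrite mulf_eq0 (gt_eqF (LS_gt0 i)) orbF => /eqP.
Qed.

Lemma split_point_le0 (I : finType) (S : I -> V) i0 i j :
  L (S i0) <= 0 -> L (split_point (L \o S) i0 S i j) <= 0.
Proof.
rewrite /split_point /=; case: ifP => // li _; case: ifP => // lj.
have lji : L (S j) - L (S i) != 0.
  by rewrite subr_eq0 gt_eqF // (le_lt_trans li) // ltNge lj.
by rewrite linearD !linearZ /= le_eqVlt; apply/orP; left; apply/eqP; field.
Qed.

Lemma hull_halfspace (I : finType) (S : I -> V) :
  exists (J : finType) (T : J -> V), hull S `&` [set x | L x <= 0] = hull T.
Proof.
have [[i0 Li0]|L_gt0] := pselect (exists i0, L (S i0) <= 0); last first.
  exists void, (fun v : void => match v with end); rewrite hull_void.
  have LS_gt0 i : 0 < L (S i) by rewrite ltNge; apply/negP => Li; apply: L_gt0; exists i.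
  apply/seteqP; split => // x [/(hull_gt0 LS_gt0)].
  by rewrite /= ltNge => /negbTE ->.
exists (I * I)%type, (fun p => split_point (L \o S) i0 S p.1 p.2).
apply/seteqP; split => x.
- move=> [[w [w0 [w1 ->]]]]; rewrite /= scalar_comb => wL_le0.
  exists (fun p => split_weight (L \o S) w p.1 p.2); split.
    by move=> [i j]; apply: split_weight_ge0.
  split; first by rewrite (split_weight_sum i0 w0 wL_le0).
  rewrite -(pair_bigA _ (fun i j => split_weight _ w i j *: split_point _ i0 S i j)).
  by rewrite split_pointE.
- move=> hx; split; first by apply: hull_subset hx => -[i j]; apply: hull_split_point.
  by apply: hull_le0 hx => -[i j]; apply: split_point_le0.
Qed.

End HalfspaceClip.

Section HullProduct.
Variables (R : realFieldType) (V W : lmodType R).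

Lemma hull_prod (I J : finType) (S : I -> V) (T : J -> W) :
  hull (fun p : I * J => (S p.1, T p.2)) = [set z | hull S z.1 /\ hull T z.2].
Proof.
apply/seteqP; split => [z hz|[x y] [/= [w [w0 [w1 ->]]] [v [v0 [v1 ->]]]]].
  split.
    have : (fst @` hull (fun p : I * J => (S p.1, T p.2))) z.1 by exists z.
    rewrite (hull_image _ (linear_affine fst)) => hz1.
    by apply: (hull_subset _ hz1) => p; apply: hull_vertex.
  have : (snd @` hull (fun p : I * J => (S p.1, T p.2))) z.2 by exists z.
  rewrite (hull_image _ (linear_affine snd)) => hz2.
  by apply: (hull_subset _ hz2) => p; apply: hull_vertex.
exists (fun p => w p.1 * v p.2); split; first by move=> p; rewrite mulr_ge0.
split.
  rewrite -(pair_bigA _ (fun i j => w i * v j)) /= -[RHS]w1.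
  by apply: eq_bigr => i _; rewrite -mulr_sumr v1 mulr1.
apply: injective_projections; rewrite /= linear_sum /=.
  rewrite -(pair_bigA _ (fun i j => (w i * v j) *: S i)) /=.
  by apply: eq_bigr => i _; rewrite -scaler_suml -mulr_sumr v1 mulr1.
rewrite -(pair_bigA _ (fun i j => (w i * v j) *: T j)) /= exchange_big /=.
by apply: eq_bigr => j _; rewrite -scaler_suml -mulr_suml w1 mul1r.
Qed.

End HullProduct.

Lemma hull_halfspaces (R : realFieldType) (V : lmodType R) (K : finType)
    (L : K -> {scalar V}) (I : finType) (S : I -> V) :
  exists (J : finType) (T : J -> V),
    hull S `&` [set x | forall k, L k x <= 0] = hull T.
Proof.
suff clip (s : seq K) : exists (J : finType) (T : J -> V),
    hull S `&` [set x | forall k, k \in s -> L k x <= 0] = hull T.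
  have [J [T hT]] := clip (enum K); exists J, T; rewrite -hT.
  by apply/seteqP; split => x [Sx Lx]; split => // k; apply: Lx; rewrite mem_enum.
elim: s => [|k s [J [T IH]]].
  by exists I, S; apply/seteqP; split => x; [case | split].
have [J' [T' hT']] := hull_halfspace (L k) T; exists J', T'.
rewrite -hT' -IH; apply/seteqP; split => x.
  move=> [Sx Lx]; do 2?split => //; first by move=> k' ks; apply: Lx; rewrite inE ks orbT.
  by apply: Lx; rewrite mem_head.
move=> [[Sx Lx] Lkx]; split => // k'; rewrite inE => /orP[/eqP -> //|].
exact: Lx.
Qed.

Section HullIntersection.
Variables (R : realFieldType) (V : lmodType R) (D : finType) (phi : D -> {scalar V}).
Hypothesis phi_sep : forall x y, (forall d, phi d x = phi d y) -> x = y.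

(* [hull S `&` hull T] is the first projection of [hull (S x T)] cut down to the
   diagonal, and the diagonal is an intersection of half-spaces. *)
Lemma hullI (I J : finType) (S : I -> V) (T : J -> V) :
  exists (K : finType) (U : K -> V), hull S `&` hull T = hull U.
Proof.
pose psi (k : D * bool) : {scalar (V * V)%type} :=
  if k.2 then (phi k.1 \o fst) \- (phi k.1 \o snd) : {scalar _}
  else (phi k.1 \o snd) \- (phi k.1 \o fst) : {scalar _}.
have [K [U hU]] := hull_halfspaces psi (fun p : I * J => (S p.1, T p.2)).
exists K, (fst \o U); rewrite -(hull_image _ (linear_affine fst)) -hU hull_prod.
apply/seteqP; split => [x [Sx Tx]|_ [z [[Sz Tz] psi_z] <-]].
  by exists (x, x) => //; split => // -[d []]; rewrite /psi /= subrr.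
suff z12 : z.1 = z.2 by split; rewrite //= z12.
apply: phi_sep => d; apply/eqP; rewrite eq_le.
have := psi_z (d, true); have := psi_z (d, false).
by rewrite /psi /= !subr_le0 => -> ->.
Qed.

End HullIntersection.

Section Polyhedral.
Variables (R : realFieldType) (V : lmodType R).

Definition polytope (P : set V) := exists (I : finType) (S : I -> V), P = hull S.

Definition polyhedral (P : set V) :=
  exists (K : finType) (F : K -> set V), (forall k, polytope (F k)) /\ P = \bigcup_k F k.

Lemma polyhedral_hull (I : finType) (S : I -> V) : polyhedral (hull S).
Proof.
exists unit, (fun _ => hull S); split; first by move=> _; exists I, S.
by apply/seteqP; split => x; [exists tt | case].
Qed.

Lemma polyhedral_bigcup (A : finType) (P : A -> set V) :
  (forall a, polyhedral (P a)) -> polyhedral (\bigcup_a P a).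
Proof.
move=> hP; have /choice [g hg] : forall a, exists KF : {K : finType & K -> set V},
    (forall k, polytope (projT2 KF k)) /\ P a = \bigcup_k projT2 KF k.
  by move=> a; have [K [F hF]] := hP a; exists (existT _ K F).
exists {a : A & projT1 (g a)}, (fun p => projT2 (g (projT1 p)) (projT2 p)).
split; first by move=> [a k]; apply: (hg a).1.
apply/seteqP; split => x.
  by move=> [a _]; rewrite (hg a).2 => -[k _ Fx]; exists (existT _ a k).
by move=> [[a k] _ Fx]; exists a => //; rewrite (hg a).2; exists k.
Qed.

Lemma polyhedralU (P Q : set V) :
  polyhedral P -> polyhedral Q -> polyhedral (P `|` Q).
Proof.
move=> hP hQ; have -> : P `|` Q = \bigcup_(b : bool) (if b then P else Q).
  apply/seteqP; split => x; first by case=> ?; [exists true | exists false].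
  by case=> -[] _; [left | right].
by apply: polyhedral_bigcup => -[].
Qed.

End Polyhedral.

Lemma polyhedral_image (R : realFieldType) (V W : lmodType R) (f : V -> W) (P : set V) :
  affine f -> polyhedral P -> polyhedral (f @` P).
Proof.
move=> hf [K [F [hF ->]]]; exists K, (fun k => f @` F k); split; last exact: image_bigcup.
by move=> k; have [I [S ->]] := hF k; exists I, (f \o S); exact: hull_image.
Qed.

Section PolyhedralIntersection.
Variables (R : realFieldType) (V : lmodType R) (D : finType) (phi : D -> {scalar V}).
Hypothesis phi_sep : forall x y, (forall d, phi d x = phi d y) -> x = y.

Lemma polyhedralI (P Q : set V) :
  polyhedral P -> polyhedral Q -> polyhedral (P `&` Q).
Proof.
move=> [K1 [F1 [hF1 ->]]] [K2 [F2 [hF2 ->]]].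
exists (K1 * K2)%type, (fun p => F1 p.1 `&` F2 p.2); split.
  move=> [k1 k2]; have [I [S ->]] := hF1 k1; have [J [T ->]] := hF2 k2.
  by have [K [U ->]] := hullI phi_sep S T; exists K, U.
apply/seteqP; split => x.
  by move=> [[k1 _ F1x] [k2 _ F2x]]; exists (k1, k2).
by move=> [[k1 k2] _ [F1x F2x]]; split; [exists k1 | exists k2].
Qed.

Lemma polyhedralI_bigcap (A : finType) (C : set V) (P : A -> set V) :
  polyhedral C -> (forall a, polyhedral (P a)) -> polyhedral (C `&` \bigcap_a P a).
Proof.
move=> hC hP.
suff meet (s : seq A) : polyhedral (C `&` [set x | forall a, a \in s -> P a x]).
  have := meet (enum A); congr polyhedral; apply/seteqP.
  split => x [Cx Px]; split => // a _; first by apply: Px; rewrite mem_enum.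
  exact: Px.
elim: s => [|a s IH].
  by congr polyhedral: hC; apply/seteqP; split => x; [split | case].
have := polyhedralI IH (hP a); congr polyhedral; apply/seteqP; split => x.
  move=> [[Cx Px] Pax]; split => // b; rewrite inE => /orP[/eqP -> //|].
  exact: Px.
move=> [Cx Px]; do 2?split => //; last by apply: Px; rewrite mem_head.
by move=> b bs; apply: Px; rewrite inE bs orbT.
Qed.

End PolyhedralIntersection.

Section CubeGeometry.
Variables (R : realType) (n : nat).
(* The regular module [R^o] makes the points of [R^n] an [lmodType R]. *)
Local Notation vec := ('I_n -> R^o).
Local Notation cube := (@cube R n).
Local Notation ocube := (@ocube R n).

Lemma conv_hullE (k : nat) (S : 'I_k -> Rpoint R n) :
  conv_hull S = hull (S : 'I_k -> vec).
Proof.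
apply/seteqP; split => x [w [w0 [w1 Sx]]]; exists w; do 2!split => //.
  by apply/funext => j; rewrite Sx fct_sumE.
by move=> j; rewrite Sx fct_sumE.
Qed.

Lemma hull_enum_val (I : finType) (S : I -> vec) :
  hull S = hull (fun t : 'I_#|I| => S (enum_val t)).
Proof.
apply/seteqP; split => x [w [w0 [w1 ->]]].
  exists (fun t => w (enum_val t)); do 2!split => //.
    by rewrite -w1 (big_enum_val (A := I)).
  by rewrite (big_enum_val (A := I)).
exists (fun i => w (enum_rank i)); do 2!split => //.
  by rewrite -w1 (big_enum_val (A := I)); apply: eq_bigr => t _; rewrite enum_valK.
by rewrite (big_enum_val (A := I)); apply: eq_bigr => t _; rewrite enum_valK.
Qed.

Lemma polyhedronE (P : set (Rpoint R n)) : polyhedron P <-> polyhedral (P : set vec).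
Proof.
split.
  move=> [m [sz [S ->]]]; exists 'I_m, (fun t => conv_hull (S t)); split.
    by move=> t; exists 'I_(sz t), (S t); rewrite conv_hullE.
  by apply/seteqP; split => x; [move=> [t St]; exists t | move=> [t _ St]; exists t].
move=> [K [F [hF ->]]].
have /choice [g hg] :
    forall k, exists IS : {I : finType & I -> vec}, F k = hull (projT2 IS).
  by move=> k; have [I [S ->]] := hF k; exists (existT _ I S).
exists #|K|, (fun t => #|projT1 (g (enum_val t))|),
  (fun t i => projT2 (g (enum_val t)) (enum_val i)).
apply/seteqP; split => x.
  move=> [k _ Fk]; exists (enum_rank k); rewrite conv_hullE enum_rankK.
  by rewrite -hull_enum_val -hg.
by move=> [t]; rewrite conv_hullE -hull_enum_val -hg => Ft; exists (enum_val t).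
Qed.

Definition coord (j : 'I_n) (x : vec) : R := x j.

Fact coord_is_scalar j : scalar (coord j). Proof. by []. Qed.

HB.instance Definition _ j :=
  GRing.isLinear.Build R vec R *%R (coord j) (coord_is_scalar j).

Lemma coord_sep (x y : vec) : (forall j, coord j x = coord j y) -> x = y.
Proof. exact: funext. Qed.

Lemma scale_vecE a (f : vec) i : (a *: f) i = a * f i. Proof. by []. Qed.

Definition scale_shift (p q : 'I_n -> R) (x : vec) : vec := fun i => p i * x i + q i.

Lemma scale_shift_affine p q : affine (scale_shift p q).
Proof.
move=> I w S w1; apply/funext => i; rewrite /scale_shift !fct_sumE mulr_sumr.
rewrite -[q i]mul1r -w1 mulr_suml -big_split; apply: eq_bigr => k _ /=.
by rewrite !scale_vecE; ring.
Qed.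

Definition corner (c : {ffun 'I_n -> bool}) : vec := fun i => (c i)%:R.

Lemma cube_hull : cube = hull corner.
Proof.
apply/seteqP; split => [x x01|_ [w [w0 [w1 ->]]] j]; last first.
  rewrite fct_sumE /=; apply/andP; split.
    by apply: sumr_ge0 => c _; rewrite scale_vecE mulr_ge0 ?ler0n.
  by rewrite -w1 ler_sum // => c _; rewrite scale_vecE ler_piMr ?lern1 ?leq_b1.
pose F i (b : bool) : R := if b then x i else 1 - x i.
have F_sum i : \sum_b F i b = 1 by rewrite big_bool /F /= addrC subrK.
exists (fun c : {ffun 'I_n -> bool} => \prod_i F i (c i)); split.
  move=> c; apply: prodr_ge0 => i _; rewrite /F.
  by case: (c i); have /andP[? ?] := x01 i; rewrite ?subr_ge0.
split; first by rewrite -bigA_distr_bigA big1.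
apply/funext => j; rewrite fct_sumE /=.
(* Marking coordinate [j] turns the sum over all corners into a product. *)
transitivity (\sum_(c : {ffun 'I_n -> bool})
    \prod_i (F i (c i) * (if i == j then (c i)%:R else 1))).
  rewrite -(bigA_distr_bigA (fun i (b : bool) => F i b * (if i == j then b%:R else 1))).
  rewrite (bigD1 j) //= [X in _ * X]big1 ?mulr1; last first.
    move=> i /negbTE ij; rewrite -[RHS](F_sum i); apply: eq_bigr => b _.
    by rewrite ij mulr1.
  by rewrite eqxx big_bool /F /= mulr1 mulr0 addr0.
apply: eq_bigr => c _; rewrite scale_vecE big_split /= [X in _ * X](bigD1 j) //=.
by rewrite eqxx [X in _ * (_ * X)]big1 ?mulr1 // => i /negbTE ->.
Qed.

Lemma polyhedral_cube : polyhedral (cube : set vec).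
Proof. by rewrite cube_hull; apply: polyhedral_hull. Qed.

Definition pin (i : 'I_n) (e : bool) : vec -> vec :=
  scale_shift (fun j => (j != i)%:R) (fun j => (j == i)%:R * e%:R).

Lemma cube_boundaryE :
  cube `\` ocube = \bigcup_(p : 'I_n * bool) pin p.1 p.2 @` cube.
Proof.
apply/seteqP; split => [x [x01 /existsNP [i xi]]|_ [[i e] _ [y y01 <-]]].
  have [x0 x1] := andP (x01 i).
  have xiE : x i = (x i == 1)%:R.
    have [->//|xi_neq1] := eqVneq (x i) 1; apply/eqP; rewrite eq_le x0 andbT leNgt.
    by apply/negP => xi_gt0; apply: xi; rewrite xi_gt0 lt_neqAle xi_neq1.
  exists (i, x i == 1) => //; exists x => //; apply/funext => j.
  rewrite /pin /scale_shift /=; have [->|_] := eqVneq j i.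
    by rewrite mul0r add0r mul1r -xiE.
  by rewrite mul1r mul0r addr0.
split=> [j|pin_y]; rewrite /pin /scale_shift /=.
  have [->|_] := eqVneq j i; last by rewrite mul1r mul0r addr0.
  by rewrite mul0r add0r mul1r ler0n lern1 leq_b1.
have := pin_y i; rewrite /pin /scale_shift /= eqxx mul0r add0r mul1r.
by case: (e) => /andP[]; rewrite ltxx.
Qed.

Lemma polyhedral_cube_boundary : polyhedral (cube `\` ocube : set vec).
Proof.
rewrite cube_boundaryE; apply: polyhedral_bigcup => p.
exact: polyhedral_image (scale_shift_affine _ _) polyhedral_cube.
Qed.

End CubeGeometry.

Section Zigzag.
Variable R : realType.

(* [zig t] is [3t], [2 - 3t] and [3t - 2] on the three thirds of [[0, 1]]. *)
Definition slope (k : 'I_3) : R := if val k == 1%N then -3 else 3.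
Definition offset (k : 'I_3) : R :=
  if val k == 0%N then 0 else if val k == 1%N then 2 else -2.
Definition branch (t : R) : 'I_3 :=
  if t <= 3^-1 then @Ordinal 3 0 isT else if t <= 2 / 3 then @Ordinal 3 1 isT
  else @Ordinal 3 2 isT.
Definition zig (t : R) : R := slope (branch t) * t + offset (branch t).

Lemma slope_neq0 k : slope k != 0.
Proof. by rewrite /slope; case: ifP => _; rewrite ?oppr_eq0 pnatr_eq0. Qed.

Lemma zig_in01 t : 0 <= t <= 1 -> 0 <= zig t <= 1.
Proof.
move=> /andP[t0 t1]; rewrite /zig /branch.
by case: (lerP _ (3^-1)) => ?; [|case: (lerP _ (2/3)) => ?];
  rewrite /slope /offset /=; apply/andP; split; lra.
Qed.

Lemma zig_branch_inverse (k : 'I_3) y : 0 <= y <= 1 ->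
  let t := (slope k)^-1 * y - offset k / slope k in 0 <= t <= 1 /\ zig t = y.
Proof.
move=> /andP[y0 y1] /=; rewrite /zig /branch.
case: (lerP _ (3^-1)) => c1.
  by case: k c1 => [[|[|[|k]]] hk] //=; rewrite /slope /offset /= => c1;
    split; try (apply/andP; split); lra.
case: (lerP _ (2/3)) => c2;
  by case: k c1 c2 => [[|[|[|k]]] hk] //=; rewrite /slope /offset /= => c1 c2;
    split; try (apply/andP; split); lra.
Qed.

End Zigzag.

Section ZigzagMap.
Variables (R : realType) (n : nat).
Local Notation vec := ('I_n -> R^o).
Local Notation cube := (@cube R n).
Local Notation ocube := (@ocube R n).

Definition zigzag (x : vec) : vec := fun i => zig (x i).

Definition lift (a : {ffun 'I_n -> 'I_3}) : vec -> vec :=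
  scale_shift (fun i => slope R (a i)) (fun i => offset R (a i)).

Definition unlift (a : {ffun 'I_n -> 'I_3}) : vec -> vec :=
  scale_shift (fun i => (slope R (a i))^-1)
              (fun i => - (offset R (a i) / slope R (a i))).

Lemma liftK a : cancel (lift a) (unlift a).
Proof.
move=> x; apply/funext => i; rewrite /unlift /lift /scale_shift.
by have := slope_neq0 R (a i) => ?; field.
Qed.

Lemma unliftK a : cancel (unlift a) (lift a).
Proof.
move=> y; apply/funext => i; rewrite /unlift /lift /scale_shift.
by have := slope_neq0 R (a i) => ?; field.
Qed.

Lemma zigzagE x : zigzag x = lift [ffun i => branch (x i)] x.
Proof. by apply/funext => i; rewrite /lift /scale_shift ffunE. Qed.

Lemma ocube_sub_cube : ocube `<=` cube.
Proof. by move=> x x01 i; have /andP[? ?] := x01 i; rewrite !ltW. Qed.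

Lemma cube_zigzag x : cube x -> cube (zigzag x).
Proof. by move=> x01 i; apply: zig_in01. Qed.

Lemma cube_unlift a y : cube y -> cube (unlift a y).
Proof. by move=> y01 i; have [] := zig_branch_inverse (a i) (y01 i). Qed.

Lemma zigzag_unlift a y : cube y -> zigzag (unlift a y) = y.
Proof.
by move=> y01; apply/funext => i; have [] := zig_branch_inverse (a i) (y01 i).
Qed.

(* The middle branch maps [[0, 1]] into [[1/3, 2/3]]. *)
Lemma zigzag_onto : zigzag @` ocube = cube.
Proof.
apply/seteqP; split => [_ [x /ocube_sub_cube x01 <-]|y y01]; first exact: cube_zigzag.
exists (unlift [ffun => @Ordinal 3 1 isT] y); last exact: zigzag_unlift.
move=> i; rewrite /unlift /scale_shift ffunE /slope /offset /=.
by have /andP[? ?] := y01 i; apply/andP; split; lra.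
Qed.

Lemma zigzag_preimage (Q : set vec) : Q `<=` cube ->
  ocube `&` zigzag @^-1` (cube `\` Q) = (cube `\` \bigcup_a unlift a @` Q) `&` ocube.
Proof.
move=> Qc; apply/seteqP; split => x.
  move=> [xo [_ zQ]]; split=> //; split; first exact: ocube_sub_cube.
  by move=> [a _ [q qQ qx]]; apply: zQ; rewrite -qx zigzag_unlift //; apply: Qc.
move=> [[x01 xQ] xo]; split => //; split; first exact: cube_zigzag.
move=> zQ; apply: xQ; exists [ffun i => branch (x i)] => //; exists (zigzag x) => //.
by rewrite zigzagE liftK.
Qed.

Lemma zigzag_image (Q : set vec) : Q `<=` cube ->
  zigzag @` ((cube `\` Q) `&` ocube)
  = cube `\` (cube `&` \bigcap_a lift a @` ((cube `\` ocube) `|` Q)).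
Proof.
move=> Qc; apply/seteqP; split => [_ [x [[x01 xQ] xo] <-]|y [y01 not_lifted]].
  split; first exact: cube_zigzag.
  move=> [_ /(_ [ffun i => branch (x i)] I) [z zbQ]].
  rewrite zigzagE => /(can_inj (@liftK _)) zx; move: zbQ; rewrite {}zx.
  by case=> [[_ /(_ xo)]|].
have [a ya] : exists a, ~ (lift a @` ((cube `\` ocube) `|` Q)) y.
  by apply/existsNP => ya; apply: not_lifted; split.
exists (unlift a y); last exact: zigzag_unlift.
have ux01 := cube_unlift a y01.
split; first split => // [uQ].
  by apply: ya; exists (unlift a y); [right | exact: unliftK].
apply: contrapT => uo; apply: ya.
by exists (unlift a y); [left | exact: unliftK].
Qed.

Lemma zigzag_polyhedral : polyhedral_map zigzag.
Proof.
move=> _ [Q [/polyhedronE Qp [Qc ->]]].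
exists (cube `\` \bigcup_a unlift a @` Q); split; last exact: zigzag_preimage.
exists (\bigcup_a unlift a @` Q); split.
  apply/polyhedronE; apply: polyhedral_bigcup => a.
  exact: polyhedral_image (scale_shift_affine _ _) Qp.
by split => // _ [a _ [q qQ <-]]; apply/cube_unlift/Qc.
Qed.

Lemma zigzag_open : open_map zigzag.
Proof.
move=> _ [_ [[Q [/polyhedronE Qp [Qc ->]]] ->]].
exists (cube `&` \bigcap_a lift a @` ((cube `\` ocube) `|` Q)); split.
  apply/polyhedronE.
  apply: (polyhedralI_bigcap (@coord_sep R n) (@polyhedral_cube R n)) => a.
  apply: polyhedral_image (scale_shift_affine _ _) _.
  exact: polyhedralU (@polyhedral_cube_boundary R n) Qp.
by split; [apply: subIsetl | exact: zigzag_image].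
Qed.

End ZigzagMap.

Theorem lemma5p7 (R : realType) (n : nat) (hn : (0 < n)%N) :
  exists g : Rpoint R n -> Rpoint R n,
    g @` @ocube R n = @cube R n /\
    polyhedral_map g /\ open_map g.
Proof.
exists (@zigzag R n); split; first exact: zigzag_onto.
by split; [exact: zigzag_polyhedral | exact: zigzag_open].
Qed.
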